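(* Let $\mu$ be a bounded continuous valuation on a topological space $X$, and let $\nu:\mathcal OX\to\mathbb R\cup\{-\infty,+\infty\}$ be a monotonic map with $\nu(\emptyset)=0$. If $\mu+\nu$ (defined pointwise) is a continuous valuation, then so is $\nu$.
   Context: A valuation on $X$ is a map $\mathcal OX\to[0,\infty]$ with value $0$ on $\emptyset$, monotone and modular; it is continuous if it preserves suprema of directed families of opens; bounded if its value on $X$ is finite. *)

From HB Require Import structures.
From mathcomp Require Import all_boot all_order all_algebra.
From mathcomp Require Import all_classical all_reals.
From mathcomp Require Import topology ereal.
Set Implicit Arguments. Unset Strict Implicit. Unset Printing Implicit Defensive.
Import Order.TTheory GRing.Theory Num.Theory.
Local Open Scope classical_set_scope.
Local Open Scope ereal_scope.

(* Maps O(X) -> \bar R are represented as functions on all subsets of X;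
   only their values on open sets matter in the definitions below. *)

Definition directed_open_family (T : topologicalType) (D : set (set T)) :=
  [/\ D !=set0,
      (forall U, D U -> open U) &
      (forall U V, D U -> D V -> exists2 W, D W & U `|` V `<=` W)].

Definition valuation (R : realType) (T : topologicalType) (f : set T -> \bar R) :=
  [/\ f set0 = 0,
      (forall U, open U -> 0 <= f U),
      (forall U V, open U -> open V -> U `<=` V -> f U <= f V) &
      (forall U V, open U -> open V -> f U + f V = f (U `|` V) + f (U `&` V))].

Definition continuous_valuation (R : realType) (T : topologicalType)
  (f : set T -> \bar R) :=
  valuation f /\
  (forall D : set (set T), directed_open_family D ->
     f (\bigcup_(U in D) U) = ereal_sup (f @` D)).

Definition bounded_valuation (R : realType) (T : topologicalType)
  (f : set T -> \bar R) := f setT < +oo.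

From HB Require Import structures.
From mathcomp Require Import all_boot all_order all_algebra.
From mathcomp Require Import all_classical all_reals.
From mathcomp Require Import topology ereal.
Import Order.TTheory GRing.Theory Num.Theory.
Local Open Scope classical_set_scope.
Local Open Scope ereal_scope.

(* Since mu is bounded and monotone, it is finite on open sets, so it can be
   cancelled from both sides of the modular law of mu + nu.  For continuity,
   nu(\bigcup D) >= sup nu(D) holds by monotonicity, while
   mu(\bigcup D) + nu(\bigcup D) = sup (mu + nu)(D) <= mu(\bigcup D) + sup nu(D),
   and the finite term mu(\bigcup D) cancels again. *)

Lemma fin_num_addeI (R : realDomainType) (x a b : \bar R) :
  x \is a fin_num -> x + a = x + b -> a = b.
Proof.
move=> xfin xab.
by rewrite -[a](addeK _ xfin) -[b](addeK _ xfin) (addeC a) (addeC b) xab.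
Qed.

Definition open_monotone {R : realType} {T : topologicalType}
    (f : set T -> \bar R) :=
  forall U V, open U -> open V -> U `<=` V -> f U <= f V.

Section open_set_functions.
Variables (R : realType) (T : topologicalType).

Lemma open_monotone_ge0 (f : set T -> \bar R) U :
  open_monotone f -> f set0 = 0 -> open U -> 0 <= f U.
Proof. by move=> fmono f0 oU; rewrite -f0; apply: fmono => //; exact: open0. Qed.

Lemma open_monotone_sup_le (f : set T -> \bar R) (D : set (set T)) :
  open_monotone f -> (forall U, D U -> open U) ->
  ereal_sup (f @` D) <= f (\bigcup_(U in D) U).
Proof.
move=> fmono Dopen; apply: ge_ereal_sup => _ [U DU <-].
apply: fmono; [exact: Dopen | exact: bigcup_open | exact: bigcup_sup].
Qed.

Lemma bounded_valuation_fin_num (f : set T -> \bar R) U :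
  valuation f -> bounded_valuation f -> open U -> f U \is a fin_num.
Proof.
move=> [_ fge0 fmono _] fbd oU; rewrite ge0_fin_numE ?fge0 //.
by apply: le_lt_trans fbd; apply: fmono => //; exact: openT.
Qed.

End open_set_functions.

Section cancel_bounded_valuation.
Variables (R : realType) (T : topologicalType) (mu nu : set T -> \bar R).
Hypotheses (mu_val : valuation mu) (mu_bounded : bounded_valuation mu).

Let mu_fin U : open U -> mu U \is a fin_num.
Proof. exact: bounded_valuation_fin_num mu_val mu_bounded. Qed.

Lemma cancel_valuation_modular :
  valuation (fun W => mu W + nu W) -> forall U V, open U -> open V ->
  nu U + nu V = nu (U `|` V) + nu (U `&` V).
Proof.
move=> [_ _ _ mnu_mod] U V oU oV; have [_ _ _ mu_mod] := mu_val.
have := mnu_mod U V oU oV.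
rewrite (addeACA (mu U)) (addeACA (mu (U `|` V))) mu_mod // => eq_sum.
apply: fin_num_addeI eq_sum.
by rewrite fin_numD !mu_fin //; [exact: openI | exact: openU].
Qed.

Lemma cancel_valuation_directed_sup :
  open_monotone nu -> continuous_valuation (fun W => mu W + nu W) ->
  forall D, directed_open_family D ->
  nu (\bigcup_(U in D) U) = ereal_sup (nu @` D).
Proof.
move=> nu_mono [_ mnu_cont] D Ddir.
have [_ _ mu_mono _] := mu_val; have [_ Dopen _] := Ddir.
have oD : open (\bigcup_(U in D) U) by exact: bigcup_open.
apply/eqP; rewrite eq_le open_monotone_sup_le // andbT.
rewrite -(leeD2lE _ _ (mu_fin _ oD)) mnu_cont //.
apply: ge_ereal_sup => _ [U DU <-]; apply: leeD.
- apply: mu_mono => //; [exact: Dopen | exact: bigcup_sup].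
- by apply: ereal_sup_ubound; exists U.
Qed.

End cancel_bounded_valuation.

Theorem lemma3p5 (R : realType) (T : topologicalType) (mu nu : set T -> \bar R) :
  continuous_valuation mu -> bounded_valuation mu ->
  nu set0 = 0 ->
  (forall U V : set T, open U -> open V -> U `<=` V -> nu U <= nu V) ->
  continuous_valuation (fun U => mu U + nu U) ->
  continuous_valuation nu.
Proof.
move=> [mu_val _] mu_bounded nu0 nu_mono mnu_cont.
split; first split.
- exact: nu0.
- by move=> U; exact: open_monotone_ge0.
- exact: nu_mono.
- exact: cancel_valuation_modular mu_val mu_bounded mnu_cont.1.
- exact: cancel_valuation_directed_sup mu_val mu_bounded nu_mono mnu_cont.
Qed.
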